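(* Let $\mathcal{H}$ be a finite-dimensional Hilbert space with orthonormal basis $\{|g_i\rangle\}_{i=1}^{N_g}\cup\{|e_j\rangle\}_{j=1}^{N_e}$ (ground and excited states). Let $$H=\sum_{i=1}^{N_g}\sum_{j=1}^{N_e}\Big[\Delta_{ij}\big(|g_i\rangle\langle g_i|-|e_j\rangle\langle e_j|\big)+\big(V_{ij}|g_i\rangle\langle e_j|+V_{ij}^*|e_j\rangle\langle g_i|\big)\Big]$$ with $\Delta_{ij}\in\mathbb{R}$, $V_{ij}\in\mathbb{C}$. Let $\gamma_{ij}\ge 0$ be decay rates with $\Gamma_j:=\sum_{i=1}^{N_g}\gamma_{ij}>0$ for every $j$, let $\sigma_{ij}=|g_i\rangle\langle e_j|$, and define the Lindblad operator $$L(\rho)=-i[H,\rho]+\sum_{i,j}\gamma_{ij}\Big(-\tfrac12\{\sigma_{ij}^\dagger\sigma_{ij},\rho\}+\sigma_{ij}\rho\sigma_{ij}^\dagger\Big).$$ Let $\Gamma=\sum_{i,j}\gamma_{ij}\sigma_{ij}^\dagger\sigma_{ij}$, $\tilde H=H-i\Gamma$, and $L_{\tilde H}\rho=-i(\tilde H\rho-\rho\tilde H^\dagger)$. Then a density matrix $\rho_d$ on $\mathcal{H}$ is a dark state of $L$ if and only if $L_{\tilde H}\rho_d=0$.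
   Context: A density matrix is a positive semidefinite Hermitian operator of trace one. A dark state of $L$ is a density matrix $\rho$ with $L\rho=0$ that involves only the ground-state manifold, i.e. $P\rho P=\rho$ where $P=\sum_{i=1}^{N_g}|g_i\rangle\langle g_i|$ (equivalently, $\rho$ has no population or coherence involving the excited states $|e_j\rangle$). $\{A,B\}=AB+BA$ denotes the anticommutator. *)

From HB Require Import structures.
From mathcomp Require Import all_boot all_order all_algebra.
From mathcomp Require Import complex.
From mathcomp Require Import reals.
Set Implicit Arguments. Unset Strict Implicit. Unset Printing Implicit Defensive.
Import Order.TTheory GRing.Theory Num.Theory.
Local Open Scope ring_scope.
Local Open Scope complex_scope.

Section Lindblad.
Variables (R : realType) (Ng Ne : nat).
Local Notation C := R[i].
Local Notation n := (Ng + Ne)%N.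
Local Notation M := 'M[C]_n.

Definition gidx (i : 'I_Ng) : 'I_n := lshift Ne i.
Definition eidx (j : 'I_Ne) : 'I_n := rshift Ng j.

Definition dagger (m k : nat) (A : 'M[C]_(m, k)) : 'M[C]_(k, m) :=
  (map_mx Num.conj A)^T.

Definition density_matrix (rho : M) : Prop :=
  [/\ dagger rho = rho,
      (forall v : 'cV[C]_n, 0 <= (dagger v *m rho *m v) 0 0)
    & \tr rho = 1].

Definition hamiltonian (Delta : 'I_Ng -> 'I_Ne -> R) (V : 'I_Ng -> 'I_Ne -> C) : M :=
  \sum_(i < Ng) \sum_(j < Ne)
    ((Delta i j)%:C *: (delta_mx (gidx i) (gidx i) - delta_mx (eidx j) (eidx j))
     + (V i j *: delta_mx (gidx i) (eidx j)
        + (V i j)^* *: delta_mx (eidx j) (gidx i))).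

Definition sigma (i : 'I_Ng) (j : 'I_Ne) : M := delta_mx (gidx i) (eidx j).

Definition lindblad (H : M) (gamma : 'I_Ng -> 'I_Ne -> R) (rho : M) : M :=
  - 'i *: (H *m rho - rho *m H)
  + \sum_(i < Ng) \sum_(j < Ne)
      (gamma i j)%:C *:
        (- (2^-1) *: (dagger (sigma i j) *m sigma i j *m rho
                      + rho *m (dagger (sigma i j) *m sigma i j))
         + sigma i j *m rho *m dagger (sigma i j)).

Definition Gamma_op (gamma : 'I_Ng -> 'I_Ne -> R) : M :=
  \sum_(i < Ng) \sum_(j < Ne) (gamma i j)%:C *: (dagger (sigma i j) *m sigma i j).

Definition Htilde (H : M) (gamma : 'I_Ng -> 'I_Ne -> R) : M :=
  H - 'i *: Gamma_op gamma.

Definition L_Htilde (H : M) (gamma : 'I_Ng -> 'I_Ne -> R) (rho : M) : M :=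
  - 'i *: (Htilde H gamma *m rho - rho *m dagger (Htilde H gamma)).

Definition Pground : M := \sum_(i < Ng) delta_mx (gidx i) (gidx i).

Definition dark_state (L : M -> M) (rho : M) : Prop :=
  density_matrix rho /\ L rho = 0 /\ Pground *m rho *m Pground = rho.

End Lindblad.

From HB Require Import structures.
From mathcomp Require Import all_boot all_order all_algebra.
From mathcomp Require Import complex.
From mathcomp Require Import reals.
From mathcomp Require Import ring.
Set Implicit Arguments. Unset Strict Implicit. Unset Printing Implicit Defensive.
Import Order.TTheory GRing.Theory Num.Theory.
Local Open Scope ring_scope.

(* Idea: Gamma and every jump operator sigma_ij only touch excited states, so
   on a state supported on the ground manifold both L and L_Htilde reduce to
   -i[H, rho].  Conversely, as H is Hermitian,
   tr (L_Htilde rho) = -2 tr (Gamma rho) = -2 sum_ij gamma_ij rho_(e_j, e_j);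
   positivity of rho and Gamma_j > 0 then force every excited population to
   vanish, and a positive semidefinite matrix with a zero diagonal entry has
   the whole corresponding row and column equal to zero. *)

Section Dagger.
Variable R : realType.
Local Notation C := R[i].

Lemma conj_real_complex (x : R) : (x%:C%C)^* = x%:C%C.
Proof. exact: conjc_real. Qed.

Lemma daggerD m k (A B : 'M[C]_(m, k)) : dagger (A + B) = dagger A + dagger B.
Proof. by rewrite /dagger map_mxD linearD. Qed.

Lemma dagger0 m k : dagger (0 : 'M[C]_(m, k)) = 0.
Proof. by rewrite /dagger map_mx0 trmx0. Qed.

Lemma daggerN m k (A : 'M[C]_(m, k)) : dagger (- A) = - dagger A.
Proof. by rewrite /dagger map_mxN linearN. Qed.

Lemma daggerZ m k (a : C) (A : 'M[C]_(m, k)) : dagger (a *: A) = a^* *: dagger A.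
Proof. by rewrite /dagger map_mxZ linearZ. Qed.

Lemma dagger_sum m k (I : finType) (F : I -> 'M[C]_(m, k)) :
  dagger (\sum_i F i) = \sum_i dagger (F i).
Proof. exact: (big_morph _ (@daggerD m k) (@dagger0 m k)). Qed.

Lemma dagger_delta m k (i : 'I_m) (j : 'I_k) :
  dagger (delta_mx i j : 'M[C]_(m, k)) = delta_mx j i.
Proof. by rewrite /dagger map_delta_mx trmx_delta. Qed.

Lemma daggerE m k (A : 'M[C]_(m, k)) i j : dagger A i j = (A j i)^*.
Proof. by rewrite !mxE. Qed.

End Dagger.

Section DeltaMatrices.
Variable (T : pzSemiRingType) (m n p : nat).

Lemma delta_mulmx_row0 (A : 'M[T]_(m, n)) (x : 'I_p) i :
  row i A = 0 -> delta_mx x i *m A = 0.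
Proof. by move=> Ai0; rewrite -(mul_delta_mx (0 : 'I_1)) -mulmxA -rowE Ai0 mulmx0. Qed.

Lemma mulmx_delta_col0 (A : 'M[T]_(m, n)) (x : 'I_p) j :
  col j A = 0 -> A *m delta_mx j x = 0.
Proof. by move=> Aj0; rewrite -(mul_delta_mx (0 : 'I_1)) mulmxA -colE Aj0 mul0mx. Qed.

Lemma delta_mulmx_delta (A : 'M[T]_(m, n)) k l :
  delta_mx 0 k *m A *m delta_mx l 0 = (A k l)%:M :> 'M[T]_1.
Proof.
by apply/matrixP => a b; rewrite !ord1 -rowE -colE !mxE eqxx mulr1n.
Qed.

Lemma scalar_mx_sum_delta : (1%:M : 'M[T]_n) = \sum_(k < n) delta_mx k k.
Proof.
apply/matrixP => a b; rewrite mxE summxE (bigD1 a) //= big1 => [|k /negbTE kNa].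
  by rewrite mxE eqxx addr0 eq_sym.
by rewrite mxE eq_sym kNa.
Qed.

End DeltaMatrices.

Section PositiveSemidefinite.
Variables (R : realType) (n : nat) (A : 'M[R[i]]_n).
Hypothesis A_herm : dagger A = A.
Hypothesis A_psd : forall v : 'cV[R[i]]_n, 0 <= (dagger v *m A *m v) 0 0.

Lemma psd_diag_ge0 k : 0 <= A k k.
Proof.
by have := A_psd (delta_mx k 0); rewrite dagger_delta (delta_mulmx_delta A) mxE eqxx.
Qed.

Lemma psd_conj_entry k l : A l k = (A k l)^*.
Proof. by rewrite -[in LHS]A_herm daggerE. Qed.

Lemma psd_entry_eq0 k l : A k k = 0 -> A k l = 0.
Proof.
move=> Akk0; apply/eqP/negPn/negP => xNZ.
set x := A k l in xNZ; set d := A l l.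
have d_ge0 : 0 <= d := psd_diag_ge0 l.
pose v (a : R[i]) : 'cV_n := a *: delta_mx k 0 + delta_mx l 0.
have form a : (dagger (v a) *m A *m v a) 0 0 = a^* * x + a * x^* + d.
  rewrite /v daggerD daggerZ !dagger_delta !mulmxDl !mulmxDr -!scalemxAl -!scalemxAr.
  rewrite !(delta_mulmx_delta A) Akk0 (psd_conj_entry k l) !mxE !eqxx /= !mulr1n.
  by rewrite !mulr0 add0r addrA.
(* choosing a x^* = -(1 + d) makes the form at a e_k + e_l negative *)
pose a := - (1 + d) / x^*.
have ax : a * x^* = - (1 + d) by rewrite divfK // conjC_eq0.
have ax_conj : a^* * x = - (1 + d).
  by rewrite -[x]conjCK -rmorphM /= ax conj_Creal // rpredN rpredD ?real1 ?ger0_real.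
have := A_psd (v a).
rewrite form ax_conj ax (_ : _ + _ + d = - (1 + (1 + d))); last by ring.
by rewrite oppr_ge0 lt_geF // (lt_le_trans ltr01) // lerDl addr_ge0 ?ler01.
Qed.

Lemma psd_row_col_eq0 k : A k k = 0 -> row k A = 0 /\ col k A = 0.
Proof.
move=> Akk0; split; [apply/rowP => l | apply/colP => l]; rewrite !mxE.
  exact: psd_entry_eq0.
by rewrite psd_conj_entry psd_entry_eq0 ?conjC0.
Qed.

End PositiveSemidefinite.

Section Model.
Variables (R : realType) (Ng Ne : nat).
Local Notation C := R[i].
Local Notation n := (Ng + Ne)%N.
Local Notation M := 'M[C]_n.
Local Notation P := (Pground R Ng Ne).
Local Notation e := (eidx Ng).

Definition Pexcited : M := \sum_(j < Ne) delta_mx (e j) (e j).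

Definition excited_free (rho : M) :=
  forall j : 'I_Ne, row (e j) rho = 0 /\ col (e j) rho = 0.

Lemma sigma_dagger_sigma (i : 'I_Ng) (j : 'I_Ne) :
  dagger (sigma R i j) *m sigma R i j = delta_mx (e j) (e j).
Proof. by rewrite /sigma dagger_delta mul_delta_mx. Qed.

Lemma hamiltonian_herm (Delta : 'I_Ng -> 'I_Ne -> R) (V : 'I_Ng -> 'I_Ne -> C) :
  dagger (hamiltonian Delta V) = hamiltonian Delta V.
Proof.
rewrite /hamiltonian dagger_sum; apply: eq_bigr => i _.
rewrite dagger_sum; apply: eq_bigr => j _.
rewrite !daggerD !daggerZ daggerD daggerN !dagger_delta conj_real_complex conjCK.
by rewrite [X in _ + X]addrC.
Qed.

Lemma Gamma_op_herm (gamma : 'I_Ng -> 'I_Ne -> R) :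
  dagger (Gamma_op gamma) = Gamma_op gamma.
Proof.
rewrite /Gamma_op dagger_sum; apply: eq_bigr => i _.
rewrite dagger_sum; apply: eq_bigr => j _.
by rewrite daggerZ conj_real_complex sigma_dagger_sigma dagger_delta.
Qed.

Lemma L_HtildeE (H : M) gamma rho : dagger H = H ->
  L_Htilde H gamma rho =
  - 'i *: (H *m rho - rho *m H) - (Gamma_op gamma *m rho + rho *m Gamma_op gamma).
Proof.
move=> H_herm; rewrite /L_Htilde /Htilde daggerD daggerN daggerZ H_herm Gamma_op_herm.
have conj_i : ('i : C)^* = - 'i by apply/eqP; rewrite eq_complex /= oppr0 !eqxx.
have i2 : ('i : C) * 'i = -1 by rewrite -expr2 sqr_i.
rewrite conj_i mulmxBl mulmxDr -!scalemxAl mulmxN -!scalemxAr.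
rewrite !(scalerDr, scalerN, scalerA, mulrN, mulNr, opprK, i2, scaleN1r, scaleNr).
by rewrite !opprD opprK addrACA.
Qed.

Lemma Pground_add_Pexcited : P + Pexcited = 1%:M.
Proof. by rewrite scalar_mx_sum_delta big_split_ord. Qed.

Lemma excited_mulmx_Pground p (x : 'I_p) j : delta_mx x (e j) *m P = 0.
Proof.
by rewrite /Pground mulmx_sumr big1 // => i _; rewrite mul_delta_mx_0 // eq_rlshift.
Qed.

Lemma Pground_mulmx_excited p (x : 'I_p) j : P *m delta_mx (e j) x = 0.
Proof.
by rewrite /Pground mulmx_suml big1 // => i _; rewrite mul_delta_mx_0 // eq_lrshift.
Qed.

Lemma ground_supportedP rho : P *m rho *m P = rho <-> excited_free rho.
Proof.
split=> [rhoP j | rho_free].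
  by rewrite rowE colE -rhoP !mulmxA excited_mulmx_Pground -!mulmxA
             Pground_mulmx_excited !mulmx0 mul0mx.
have Qrho : Pexcited *m rho = 0.
  rewrite /Pexcited mulmx_suml big1 // => j _.
  by apply: delta_mulmx_row0; case: (rho_free j).
have rhoQ : rho *m Pexcited = 0.
  rewrite /Pexcited mulmx_sumr big1 // => j _.
  by apply: mulmx_delta_col0; case: (rho_free j).
have -> : P = 1%:M - Pexcited by rewrite -Pground_add_Pexcited addrK.
by rewrite mulmxBl mul1mx Qrho subr0 mulmxBr mulmx1 rhoQ subr0.
Qed.

Lemma lindblad_excited_free (H : M) gamma rho : dagger H = H ->
  excited_free rho -> lindblad H gamma rho = L_Htilde H gamma rho.
Proof.
move=> H_herm rho_free.
have e_rho x j : delta_mx x (e j) *m rho = 0.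
  by apply: delta_mulmx_row0; case: (rho_free j).
have rho_e x j : rho *m delta_mx (e j) x = 0.
  by apply: mulmx_delta_col0; case: (rho_free j).
have Gamma_rho : Gamma_op gamma *m rho = 0.
  rewrite /Gamma_op mulmx_suml big1 // => i _; rewrite mulmx_suml big1 // => j _.
  by rewrite -scalemxAl sigma_dagger_sigma e_rho scaler0.
have rho_Gamma : rho *m Gamma_op gamma = 0.
  rewrite /Gamma_op mulmx_sumr big1 // => i _; rewrite mulmx_sumr big1 // => j _.
  by rewrite -scalemxAr sigma_dagger_sigma rho_e scaler0.
rewrite L_HtildeE // Gamma_rho rho_Gamma addr0 subr0 /lindblad big1 ?addr0 // => i _.
rewrite big1 // => j _.
by rewrite sigma_dagger_sigma e_rho rho_e {1}/sigma e_rho !mul0mx !addr0 !scaler0.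
Qed.

Lemma mxtrace_L_Htilde (H : M) gamma rho : dagger H = H ->
  \tr (L_Htilde H gamma rho) = - (\tr (Gamma_op gamma *m rho) *+ 2).
Proof.
move=> H_herm; rewrite L_HtildeE // raddfB /= linearZ /= raddfB /= (mxtrace_mulC rho H).
by rewrite subrr mulr0 sub0r raddfD /= (mxtrace_mulC rho) mulr2n.
Qed.

Lemma mxtrace_Gamma_mul gamma (rho : M) : \tr (Gamma_op gamma *m rho) =
  \sum_(j < Ne) (\sum_(i < Ng) gamma i j)%:C%C * rho (e j) (e j).
Proof.
rewrite /Gamma_op exchange_big mulmx_suml raddf_sum; apply: eq_bigr => j _.
rewrite rmorph_sum mulr_suml mulmx_suml raddf_sum /=; apply: eq_bigr => i _.
rewrite -scalemxAl mxtraceZ sigma_dagger_sigma.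
by rewrite -(mul_delta_mx (0 : 'I_1)) -mulmxA mxtrace_mulC -rowE -colE trace_mx11 !mxE.
Qed.

Lemma excited_population_eq0 (gamma : 'I_Ng -> 'I_Ne -> R) (rho : M) (j : 'I_Ne) :
  (forall i j, 0 <= gamma i j) -> (forall j, 0 < \sum_(i < Ng) gamma i j) ->
  (forall k, 0 <= rho k k) -> \tr (Gamma_op gamma *m rho) = 0 ->
  rho (e j) (e j) = 0.
Proof.
move=> gamma_ge0 Gamma_pos rho_ge0; rewrite mxtrace_Gamma_mul.
have term_ge0 j' : 0 <= (\sum_(i < Ng) gamma i j')%:C%C * rho (e j') (e j').
  by rewrite mulr_ge0 // ler0c sumr_ge0.
move/psumr_eq0P => /(_ (fun j' _ => term_ge0 j') j isT) /eqP.
rewrite mulf_eq0 => /orP [/eqP /complexI Gamma0 | /eqP //].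
by have := Gamma_pos j; rewrite Gamma0 ltxx.
Qed.

End Model.

Theorem theorem1 (R : realType) (Ng Ne : nat)
  (Delta : 'I_Ng -> 'I_Ne -> R) (V : 'I_Ng -> 'I_Ne -> R[i])
  (gamma : 'I_Ng -> 'I_Ne -> R)
  (gamma_ge0 : forall i j, 0 <= gamma i j)
  (Gamma_pos : forall j, 0 < \sum_(i < Ng) gamma i j)
  (rho : 'M[R[i]]_(Ng + Ne)) :
  density_matrix rho ->
  (dark_state (lindblad (hamiltonian Delta V) gamma) rho <->
   L_Htilde (hamiltonian Delta V) gamma rho = 0).
Proof.
move=> rho_dm; have [rho_herm rho_psd _] := rho_dm.
have H_herm := hamiltonian_herm Delta V.
split=> [[_ [L0 /ground_supportedP rho_free]] | LH0].
  by rewrite -(lindblad_excited_free gamma H_herm rho_free) L0.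
have trGamma0 : \tr (Gamma_op gamma *m rho) = 0.
  have := congr1 mxtrace LH0; rewrite (mxtrace_L_Htilde gamma rho H_herm) mxtrace0.
  by move/eqP; rewrite oppr_eq0 mulrn_eq0 => /eqP.
have rho_free : excited_free rho.
  move=> j; apply: (psd_row_col_eq0 rho_herm rho_psd).
  exact: excited_population_eq0 gamma_ge0 Gamma_pos (psd_diag_ge0 rho_psd) trGamma0.
split=> //; split; last exact/ground_supportedP.
by rewrite (lindblad_excited_free gamma H_herm rho_free).
Qed.
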